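(* For all integers $n\ge2$ and $0\le m\le n-1$, define $$\mathcal{K}_{n,m}=-\binom{n}{2}\binom{n}{m}\binom{n-2}{m}-\binom{n}{2}\sum_{k=1}^{m}(-1)^k\Big(\binom{n}{m+k}\binom{n-2}{m-k}+\binom{n}{m-k}\binom{n-2}{m+k}\Big)+\frac{2n-2m-1}{2}\sum_{k=0}^{m}(-1)^k(1+2k)\binom{n}{m+1+k}\binom{n}{m-k}.$$ Then $\mathcal{K}_{n,m}=\dfrac{n^2}{2}\binom{n-1}{m}$.
   Context: $\binom{j}{k}=\frac{j!}{k!(j-k)!}$ if $0\le k\le j$ and $\binom{j}{k}=0$ otherwise (for all integers $j,k$). *)

From mathcomp Require Import all_boot all_order all_algebra.
Set Implicit Arguments. Unset Strict Implicit. Unset Printing Implicit Defensive.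
Import Order.TTheory GRing.Theory Num.Theory.
Local Open Scope ring_scope.

(* K_{n,m} as a rational number. 'C(j,k) is mathcomp's binomial, which is 0
   when k > j, matching the paper's convention. Here k ranges over 1..m or 0..m
   so m - k is never truncated; n - 2 is exact since n >= 2 in the theorem. *)
Definition Knm (n m : nat) : rat :=
  - ('C(n, 2) * 'C(n, m) * 'C(n - 2, m))%:R
  - ('C(n, 2))%:R * \sum_(1 <= k < m.+1)
        (-1) ^+ k * (('C(n, m + k) * 'C(n - 2, m - k)
                     + 'C(n, m - k) * 'C(n - 2, m + k))%N)%:R
  + ((2 * n - 2 * m - 1)%N)%:R / 2 * \sum_(0 <= k < m.+1)
        (-1) ^+ k * (1 + 2 * k)%N%:R * ('C(n, m + 1 + k) * 'C(n, m - k))%N%:R.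

From mathcomp Require Import all_boot all_order all_algebra.
From mathcomp Require Import ring zify.
Set Implicit Arguments. Unset Strict Implicit. Unset Printing Implicit Defensive.
Import Order.TTheory GRing.Theory Num.Theory.
Local Open Scope ring_scope.

(* Both sums in K_{n,m} are folded convolutions of the coefficients of
   (1 - X)^a and (1 + X)^b. The first is read off from
   (1 - X)^n (1 + X)^(n-2) = (1 - X)^2 (1 - X^2)^(n-2), the second from the
   Wronskian-like (1 - X)^n X ((1 + X)^n)' - X ((1 - X)^n)' (1 + X)^n
   = 2n X (1 - X^2)^(n-1); as (1 - X^2)^k has coefficients (-1)^i C(k, i)
   in even degree 2i and 0 in odd degree, this gives
     (n-1) (C(n,m) C(n-2,m) + first sum) = (n-1-2m) C(n-1,m),
     second sum = n C(n-1,m),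
   and K_{n,m} = n^2/2 C(n-1,m) follows by linear arithmetic. *)

Section FoldSums.
Variables (V : nmodType) (F : nat -> V).

Lemma big_nat_fold_mid m :
  \sum_(0 <= j < (2 * m).+1) F j
  = F m + \sum_(1 <= k < m.+1) (F (m + k)%N + F (m - k)%N).
Proof.
rewrite big_split /= (@big_cat_nat _ _ _ m) //=; last by lia.
rewrite (@big_ltn _ _ _ m); last by lia.
rewrite addrCA; congr (_ + _); rewrite addrC; congr (_ + _).
  rewrite -[in LHS](add0n m.+1) -[in RHS](add0n 1%N) !big_addn.
  have -> : ((2 * m).+1 - m.+1 = m.+1 - 1)%N by lia.
  by apply: eq_big_nat => i _; congr F; lia.
rewrite -[in RHS](add0n 1%N) big_addn big_nat_rev subn1.
by apply: eq_big_nat => i /andP[_ hi]; congr F; lia.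
Qed.

Lemma big_nat_fold_halves m :
  \sum_(0 <= j < (2 * m).+2) F j
  = \sum_(0 <= k < m.+1) (F (m - k)%N + F (m.+1 + k)%N).
Proof.
rewrite big_split /= (@big_cat_nat _ _ _ m.+1) //=; last by lia.
congr (_ + _).
  by rewrite big_nat_rev /=; apply: eq_big_nat => i /andP[_ hi]; congr F; lia.
rewrite -{1}(add0n m.+1) big_addn.
have -> : ((2 * m).+2 - m.+1 = m.+1)%N by lia.
by apply: eq_big_nat => i _; congr F; lia.
Qed.

End FoldSums.

Section BinomialPolynomials.
Variable R : comNzRingType.
Implicit Types (p q : {poly R}) (n m i : nat).

Lemma coef_1addZX_exp (c : R) n i : ((1 + c *: 'X) ^+ n)`_i = c ^+ i * 'C(n, i)%:R.
Proof.
elim: n i => [|n IHn] i; first by rewrite expr0 coefC; case: i => [|i]; rewrite ?mulr1 ?mulr0.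
rewrite exprSr mulrDr mulr1 -scalerAr coefD coefZ coefMX IHn.
case: i => [|i] /=; first by rewrite mulr0 addr0 !bin0.
by rewrite IHn binS natrD mulrDr exprS -!mulrA.
Qed.

Lemma coef_1addX_exp n i : ((1 + 'X) ^+ n)`_i = 'C(n, i)%:R :> R.
Proof. by rewrite -[X in 1 + X]scale1r coef_1addZX_exp expr1n mul1r. Qed.

Lemma coef_1subX_exp n i : ((1 - 'X) ^+ n)`_i = (-1) ^+ i * 'C(n, i)%:R :> R.
Proof. by rewrite -scaleN1r coef_1addZX_exp. Qed.

Lemma exp_1subX2_comp n : (1 - 'X^2) ^+ n = ((1 - 'X) ^+ n) \Po 'X^2 :> {poly R}.
Proof. by rewrite rmorphXn rmorphB /= comp_polyC comp_polyX. Qed.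

Lemma coef_1subX2_exp_even n m : ((1 - 'X^2) ^+ n)`_(2 * m) = (-1) ^+ m * 'C(n, m)%:R :> R.
Proof. by rewrite exp_1subX2_comp coef_comp_poly_Xn // dvdn_mulr // mulKn // coef_1subX_exp. Qed.

Lemma coef_1subX2_exp_odd n m : ((1 - 'X^2) ^+ n)`_(2 * m).+1 = 0 :> R.
Proof. by rewrite exp_1subX2_comp coef_comp_poly_Xn // dvdn2 /= oddM. Qed.

Lemma exp_1subX2 n : (1 - 'X^2) ^+ n = (1 - 'X) ^+ n * (1 + 'X) ^+ n :> {poly R}.
Proof. by rewrite -exprMn mulrDr mulr1 mulrBl mul1r addrA subrK. Qed.

Lemma exp_1subX_1addX_deriv n :
  (1 - 'X) ^+ n.+2 * (1 + 'X) ^+ n *+ n.+1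
  = (1 - 'X^2) ^+ n.+1 *+ n.+1 + (1 - 'X) * ((1 - 'X^2) ^+ n.+1)^`() :> {poly R}.
Proof.
rewrite deriv_exp derivB derivC derivXn sub0r /= expr1 !exp_1subX2 !exprS.
ring.
Qed.

Lemma exp_1subX_1addX_wronskian n :
  (1 - 'X) ^+ n.+1 * ('X * ((1 + 'X) ^+ n.+1)^`())
    - ('X * ((1 - 'X) ^+ n.+1)^`()) * (1 + 'X) ^+ n.+1
  = 'X * (1 - 'X^2) ^+ n *+ (2 * n.+1) :> {poly R}.
Proof.
rewrite !deriv_exp derivD derivB derivC derivX add0r sub0r /= exp_1subX2 !exprS.
ring.
Qed.

Lemma coef_Xderiv p i : ('X * p^`())`_i = p`_i *+ i.
Proof. by rewrite coefXM; case: i => [|i] //=; rewrite coef_deriv. Qed.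

Lemma coefM_Xderiv_sub p q i :
  (p * ('X * q^`()) - ('X * p^`()) * q)`_i
  = \sum_(j < i.+1) p`_j * q`_(i - j) * ((i - j)%:R - j%:R).
Proof.
rewrite coefB !coefM -sumrB; apply: eq_bigr => j _.
by rewrite !coef_Xderiv mulrBr !mulr_natr mulrnAl mulrnAr.
Qed.

Lemma signr_subn m k : (k <= m)%N -> (-1) ^+ (m - k) = (-1) ^+ (m + k) :> R.
Proof. by move=> le_km; rewrite -signr_odd oddB // -oddD signr_odd. Qed.

Lemma alternating_binomial_sum_mid n m :
  n.+1%:R * (('C(n.+2, m) * 'C(n, m))%:R
    + \sum_(1 <= k < m.+1) (-1) ^+ k *
        (('C(n.+2, m + k) * 'C(n, m - k) + 'C(n.+2, m - k) * 'C(n, m + k))%N)%:R)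
  = (n.+1%:R - (2 * m)%:R) * 'C(n.+1, m)%:R :> R.
Proof.
set S := (X in n.+1%:R * X).
have conv : ((1 - 'X) ^+ n.+2 * (1 + 'X) ^+ n)`_(2 * m) = (-1) ^+ m * S.
  rewrite coefM -(big_mkord xpredT
    (fun j => ((1 - 'X) ^+ n.+2)`_j * ((1 + 'X) ^+ n)`_(2 * m - j))).
  rewrite big_nat_fold_mid mulrDr !coef_1subX_exp !coef_1addX_exp.
  have -> : (2 * m - m = m)%N by lia.
  rewrite natrM mulrA mulr_sumr; congr (_ + _); apply: eq_big_nat => k /andP[_ le_km].
  rewrite !coef_1subX_exp !coef_1addX_exp signr_subn; last by lia.
  have -> : (2 * m - (m + k) = m - k)%N by lia.
  have -> : (2 * m - (m - k) = m + k)%N by lia.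
  rewrite exprD natrD !natrM; ring.
have closed_form : ((1 - 'X) ^+ n.+2 * (1 + 'X) ^+ n)`_(2 * m) *+ n.+1
    = (-1) ^+ m * ((n.+1%:R - (2 * m)%:R) * 'C(n.+1, m)%:R) :> R.
  rewrite -coefMn exp_1subX_1addX_deriv mulrBl mul1r coefD coefB coefMn.
  rewrite coef_Xderiv coef_deriv coef_1subX2_exp_odd coef_1subX2_exp_even mul0rn.
  by rewrite sub0r mulrBl !mulr_natl mulrBr !mulrnAr.
by apply: (can_inj (signrMK m)); rewrite mulrCA -conv mulr_natl closed_form.
Qed.

End BinomialPolynomials.

(* Folding produces twice the sum, so the factor 2 has to be cancelled. *)
Lemma alternating_binomial_sum_halves (R : numDomainType) n m :
  \sum_(0 <= k < m.+1)
      (-1) ^+ k * (1 + 2 * k)%N%:R * ('C(n.+1, m + 1 + k) * 'C(n.+1, m - k))%N%:R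
  = n.+1%:R * 'C(n, m)%:R :> R.
Proof.
set S := (X in X = _).
pose W : {poly R} := (1 - 'X) ^+ n.+1 * ('X * ((1 + 'X) ^+ n.+1)^`())
  - ('X * ((1 - 'X) ^+ n.+1)^`()) * (1 + 'X) ^+ n.+1.
have conv : W`_(2 * m).+1 = 2 * ((-1) ^+ m * S).
  rewrite coefM_Xderiv_sub -(big_mkord xpredT (fun j =>
    ((1 - 'X) ^+ n.+1)`_j * ((1 + 'X) ^+ n.+1)`_((2 * m).+1 - j)
      * (((2 * m).+1 - j)%:R - j%:R))).
  rewrite big_nat_fold_halves /S !mulr_sumr; apply: eq_big_nat => k /andP[_ le_km].
  rewrite -[m.+1]addn1.
  have -> : ((2 * m).+1 - (m - k) = m + 1 + k)%N by lia.
  have -> : ((2 * m).+1 - (m + 1 + k) = m - k)%N by lia.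
  have gap : (m + 1 + k)%:R - (m - k)%:R = (1 + 2 * k)%N%:R :> R.
    by apply/eqP; rewrite subr_eq -natrD; apply/eqP; congr _%:R; lia.
  rewrite -[(m - k)%:R - _]opprB gap !coef_1subX_exp !coef_1addX_exp signr_subn //.
  rewrite addn1 addSn exprS exprD natrM; ring.
have closed_form : W`_(2 * m).+1 = (-1) ^+ m * 'C(n, m)%:R *+ (2 * n.+1).
  by rewrite /W exp_1subX_1addX_wronskian coefMn coefXM coef_1subX2_exp_even.
have nz : 2 * (-1) ^+ m != 0 :> R by rewrite mulf_neq0 ?signr_eq0 ?pnatr_eq0.
by apply: (mulfI nz); rewrite -mulrA -conv closed_form; ring.
Qed.

Theorem proposition2p1 (n m : nat) (hn : (2 <= n)%N) (hm : (m <= n - 1)%N) :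
  Knm n m = (n ^ 2)%N%:R / 2 * ('C(n - 1, m))%:R.
Proof.
case: n hn hm => [|[|n]] // _; rewrite !subSS !subn0 => hm.
rewrite /Knm !subSS subn0 alternating_binomial_sum_halves.
set A := \sum_(1 <= k < m.+1) _.
have C2 : 'C(n.+2, 2)%:R = (n.+2 * n.+1)%:R / 2 :> rat.
  have := mul_bin_diag n.+2 1; rewrite bin1 /= => ->.
  by rewrite natrM mulrAC divff ?mul1r ?pnatr_eq0.
transitivity (- n.+2%:R / 2 * (n.+1%:R * (('C(n.+2, m) * 'C(n, m))%:R + A))
    + (2 * n.+2 - 2 * m - 1)%N%:R / 2 * (n.+2%:R * 'C(n.+1, m)%:R)).
  by rewrite !natrM C2 natrM; ring.
rewrite alternating_binomial_sum_mid.
have [d def_n] : exists d, n.+1 = (m + d)%N by exists (n.+1 - m)%N; lia.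
have -> : (2 * n.+2 - 2 * m - 1 = 2 * d + 1)%N by lia.
rewrite def_n natrX; ring.
Qed.
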